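(* Let $R=\bigoplus_{\alpha\in\Gamma}R_{\alpha}$ be a graded integral domain. Then $R$ is a graded-Prüfer domain if and only if $A_fA_g=A_{fg}$ for all $f,g\in R[X]$.
   Context: $\Gamma$ is a commutative cancellative monoid (written additively) whose quotient group $\langle\Gamma\rangle$ is torsion-free. A graded integral domain $R=\bigoplus_{\alpha\in\Gamma}R_\alpha$ is an integral domain that is the direct sum of additive subgroups $R_\alpha$ with $R_\alpha R_\beta\subseteq R_{\alpha+\beta}$. For $a\in R$, $C(a)$ is the ideal of $R$ generated by the homogeneous components of $a$; for $f=f_0+\cdots+f_nX^n\in R[X]$, $A_f:=\sum_i C(f_i)$. $R$ is a graded-Prüfer domain if every nonzero finitely generated homogeneous ideal of $R$ (i.e. ideal $I$ with $I=\bigoplus_\alpha(I\cap R_\alpha)$) is invertible. *)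

From HB Require Import structures.
From mathcomp Require Import all_boot all_order all_algebra fraction.
Set Implicit Arguments. Unset Strict Implicit. Unset Printing Implicit Defensive.
Import Order.TTheory GRing.Theory Num.Theory.
Local Open Scope ring_scope.

(* For a cancellative
   monoid, <Gamma> is torsion-free iff  n.+1 *a = n.+1 * b  implies a = b. *)
Definition cancellative (G : nmodType) : Prop :=
  forall a b c : G, a + b = a + c -> b = c.

Definition quotient_torsion_free (G : nmodType) : Prop :=
  forall (n : nat) (a b : G), a *+ n.+1 = b *+ n.+1 -> a = b.

Definition span (R : comRingType) (S : R -> Prop) : R -> Prop :=
  fun r => exists s : seq (R * R),
    (forall p, p \in s -> S p.2) /\ r = \sum_(p <- s) p.1 * p.2.

Definition is_ideal (R : comRingType) (I : R -> Prop) : Prop :=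
  [/\ I 0, (forall x y, I x -> I y -> I (x + y)) & (forall r x, I x -> I (r * x))].

Definition zero_ideal (R : comRingType) : R -> Prop := fun r => r = 0.

Definition ideal_sum (R : comRingType) (I J : R -> Prop) : R -> Prop :=
  span (fun x => I x \/ J x).

Definition ideal_prod (R : comRingType) (I J : R -> Prop) : R -> Prop :=
  span (fun z => exists x y, [/\ I x, J y & z = x * y]).

Definition ideal_eq (R : comRingType) (I J : R -> Prop) : Prop :=
  forall r, I r <-> J r.

(* A grading of R by Gamma: additive subgroups R_alpha with
   R_alpha R_beta <= R_(alpha+beta) and R = (+)_alpha R_alpha
   (every element is a finite sum of homogeneous elements of distinct
   degrees, and such sums are independent). *)
Record grading (G : nmodType) (R : idomainType) := Grading {
  hom : G -> R -> Prop;
  hom0 : forall a, hom a 0;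
  homD : forall a x y, hom a x -> hom a y -> hom a (x + y);
  homN : forall a x, hom a x -> hom a (- x);
  homM : forall a b x y, hom a x -> hom b y -> hom (a + b) (x * y);
  hom_gen : forall r : R, exists s : seq (G * R),
      [/\ uniq (map fst s), (forall p, p \in s -> hom p.1 p.2)
        & r = \sum_(p <- s) p.2];
  hom_indep : forall s : seq (G * R),
      uniq (map fst s) -> (forall p, p \in s -> hom p.1 p.2) ->
      \sum_(p <- s) p.2 = 0 -> forall p, p \in s -> p.2 = 0
}.

Section Graded.
Variables (G : nmodType) (R : idomainType) (gr : grading G R).

Definition hom_decomp (a : R) (s : seq (G * R)) : Prop :=
  [/\ uniq (map fst s), (forall p, p \in s -> hom gr p.1 p.2 /\ p.2 != 0)
    & a = \sum_(p <- s) p.2].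

Definition is_component (a x : R) : Prop :=
  exists s, hom_decomp a s /\ x \in map snd s.

Definition Cont (a : R) : R -> Prop := span (is_component a).

Definition Af (f : {poly R}) : R -> Prop :=
  foldr (@ideal_sum R) (@zero_ideal R) [seq Cont f`_i | i <- iota 0 (size f)].

(* homogeneous ideal: I = (+)_alpha (I cap R_alpha) *)
Definition homogeneous_ideal (I : R -> Prop) : Prop :=
  is_ideal I /\ forall a x, I a -> is_component a x -> I x.

Definition fin_gen (I : R -> Prop) : Prop :=
  exists s : seq R, ideal_eq I (span (fun x => x \in s)).

(* Invertible ideal: there is a fractional ideal J (an R-submodule of the
   fraction field) with I J = R. *)
Definition invertible_ideal (I : R -> Prop) : Prop :=
  exists J : {fraction R} -> Prop,
    [/\ J 0, (forall x y, J x -> J y -> J (x + y)),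
        (forall r x, J x -> J (FracField.tofrac r * x)),
        (exists d : R, d != 0 /\ forall x, J x -> exists r, FracField.tofrac d * x = FracField.tofrac r)
      & forall k : {fraction R},
          (exists s : seq (R * {fraction R}),
              (forall p, p \in s -> I p.1 /\ J p.2) /\
              k = \sum_(p <- s) FracField.tofrac p.1 * p.2)
          <-> (exists r : R, k = FracField.tofrac r)].

Definition graded_Prufer : Prop :=
  forall I : R -> Prop, homogeneous_ideal I -> fin_gen I ->
    (exists x, I x /\ x != 0) -> invertible_ideal I.

End Graded.

(* For nonzero homogeneous [a], [b], the content formula for suitable linear
   polynomials gives [ab = r a^2 + s b^2], [b | ra] and [a | sb], so [(a, b)]
   is invertible with inverse [(r/b, s/a)].  A finitely generated ideal whose
   generators are pairwise invertible is invertible, and a homogeneous ideal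
   is generated by the homogeneous components of any generating set.

   Conversely [A_(fg) <= A_f A_g] always holds.  For homogeneous components
   [d] of [f_i] and [e] of [g_j], invertibility of [A_f] produces [H] and [Q]
   with [f H = d Q] and [A_Q = R].  Since [<Gamma>] is torsion-free, the
   degrees occurring in [Q] and [g] generate a totally ordered monoid, and a
   McCoy-type descent on the homogeneous terms of [g] shows [e \in A_(Q g)].
   Hence [d e \in A_(d Q g) = A_(H f g) <= A_(f g)]. *)

From Pilot Require Import Defs.
From HB Require Import structures.
From mathcomp Require Import all_boot all_order all_algebra fraction.
From mathcomp Require Import boolp ring zify.
Set Implicit Arguments. Unset Strict Implicit. Unset Printing Implicit Defensive.
Import Order.TTheory GRing.Theory Num.Theory.
Local Open Scope ring_scope.

(* [vector] exports another [span]. *)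
Local Notation span := Defs.span.

(** * Homogeneous components *)

Lemma sum_over_fibers (T I : eqType) (V : nmodType) (D : seq T) (s : seq I)
    (k : I -> T) (F : I -> V) :
  uniq D -> (forall p, p \in s -> k p \in D) ->
  \sum_(d <- D) \sum_(p <- s | k p == d) F p = \sum_(p <- s) F p.
Proof.
move=> uD hs.
rewrite (eq_bigr (fun d => \sum_(p <- s) (if k p == d then F p else 0)));
  last by move=> d _; rewrite big_mkcond.
rewrite exchange_big /= big_seq [RHS]big_seq; apply: eq_bigr => p ps.
rewrite (bigD1_seq (k p)) ?hs //= eqxx big1 ?addr0 // => d.
by rewrite eq_sym => /negbTE ->.
Qed.

Lemma sum_pred1_seq (T : eqType) (V : nmodType) (D : seq T) (x : T) (F : T -> V) :
  uniq D -> \sum_(d <- D | d == x) F d = if x \in D then F x else 0.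
Proof.
move=> uD; case: ifP => xD.
  by rewrite -big_filter (filter_pred1_uniq uD xD) big_seq1.
by rewrite big_seq_cond big1 // => d /andP [dD /eqP dx]; rewrite dx xD in dD.
Qed.

Lemma sum_key_uniq (K T : eqType) (V : nmodType) (s : seq (K * T))
    (F : K * T -> V) p :
  uniq (map fst s) -> p \in s -> \sum_(q <- s | q.1 == p.1) F q = F p.
Proof.
elim: s => // q s IH /= /andP [qn us]; rewrite inE big_cons => /orP [/eqP -> | ps].
  rewrite eqxx big_seq_cond big1 ?addr0 // => q' /andP [q's /eqP e].
  by move: qn; rewrite -e map_f.
case: eqP => [e|_]; last exact: IH.
by move: qn; rewrite e map_f.
Qed.

Section HomogeneousComponents.
Variables (G : nmodType) (R : idomainType) (gr : grading G R).
Local Notation hom := (Defs.hom gr).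

Lemma hom_sum (a : G) (I : Type) (r : seq I) (P : pred I) (F : I -> R) :
  (forall i, P i -> hom a (F i)) -> hom a (\sum_(i <- r | P i) F i).
Proof. by move=> h; apply: (big_ind (hom a)) => //; [exact: Defs.hom0 | exact: Defs.homD]. Qed.

Lemma hom_sum_degree (s : seq (G * R)) g : (forall p, p \in s -> hom p.1 p.2) ->
  hom g (\sum_(p <- s | p.1 == g) p.2).
Proof.
by move=> hs; rewrite big_seq_cond; apply: hom_sum => p /andP [/hs + /eqP <-].
Qed.

Lemma hom_indep_degree (s : seq (G * R)) : (forall p, p \in s -> hom p.1 p.2) ->
  \sum_(p <- s) p.2 = 0 -> forall g, \sum_(p <- s | p.1 == g) p.2 = 0.
Proof.
move=> hs s0 g; pose D := undup (map fst s).
pose s' := [seq (d, \sum_(p <- s | p.1 == d) p.2) | d <- D].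
have s'_keys : map fst s' = D by rewrite -map_comp (@eq_map _ _ _ id) // map_id.
have s'_hom p : p \in s' -> hom p.1 p.2 by move=> /mapP [d _ ->]; apply: hom_sum_degree.
have s'_sum : \sum_(p <- s') p.2 = 0.
  by rewrite big_map sum_over_fibers ?undup_uniq // => p ps; rewrite mem_undup map_f.
have s'_uniq : uniq (map fst s') by rewrite s'_keys undup_uniq.
have := hom_indep s'_uniq s'_hom s'_sum.
case gD : (g \in D) => H; first exact: H _ (map_f _ gD).
rewrite big_seq_cond big1 // => p /andP [ps /eqP pg].
by move: gD; rewrite mem_undup -pg map_f.
Qed.

(* The components of [r] are read off a decomposition picked by choice;
   [hcomp_sum_hom] shows that they do not depend on that choice. *)
Definition hdecomp (r : R) : seq (G * R) := sval (cid (hom_gen gr r)).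

Lemma hdecompP r : [/\ uniq (map fst (hdecomp r)),
  (forall p, p \in hdecomp r -> hom p.1 p.2) & r = \sum_(p <- hdecomp r) p.2].
Proof. exact: svalP (cid (hom_gen gr r)). Qed.

Definition hcomp (g : G) (r : R) : R := \sum_(p <- hdecomp r | p.1 == g) p.2.
Definition hsupp (r : R) : seq G := map fst (hdecomp r).

Lemma hsupp_uniq r : uniq (hsupp r). Proof. by case: (hdecompP r). Qed.

Lemma hcomp_sum_hom (s : seq (G * R)) g : (forall p, p \in s -> hom p.1 p.2) ->
  hcomp g (\sum_(p <- s) p.2) = \sum_(p <- s | p.1 == g) p.2.
Proof.
move=> hs; set r := \sum_(p <- s) p.2; have [_ hd er] := hdecompP r.
pose t := s ++ [seq (p.1, - p.2) | p <- hdecomp r].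
have t_hom p : p \in t -> hom p.1 p.2.
  rewrite mem_cat => /orP [/hs // | /mapP [q qd ->]] /=.
  exact/Defs.homN/hd.
have t_sum : \sum_(p <- t) p.2 = 0 by rewrite big_cat big_map /= sumrN -er subrr.
have := hom_indep_degree t_hom t_sum g; rewrite big_cat big_map /= sumrN.
by move/eqP; rewrite subr_eq0 => /eqP ->.
Qed.

Lemma hcomp_is_hom g r : hom g (hcomp g r).
Proof. by apply: hom_sum_degree; case: (hdecompP r). Qed.

Lemma sum_hcomp r : r = \sum_(g <- hsupp r) hcomp g r.
Proof.
have [u hd er] := hdecompP r.
by rewrite /hcomp /hsupp sum_over_fibers // => p pd; apply: map_f.
Qed.

Lemma hcomp_supp g r : hcomp g r != 0 -> g \in hsupp r.
Proof.
apply: contraR => gn; rewrite /hcomp big_seq_cond big1 // => p /andP [pd /eqP pg].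
by move: gn; rewrite -pg map_f.
Qed.

Lemma hcompE_hom a x g : hom a x -> hcomp g x = if a == g then x else 0.
Proof.
move=> hx; have := @hcomp_sum_hom [:: (a, x)] g; rewrite big_seq1 => ->.
  by rewrite big_cons big_nil /=; case: ifP; rewrite ?addr0.
by move=> p; rewrite inE => /eqP ->.
Qed.

Lemma hcompD g x y : hcomp g (x + y) = hcomp g x + hcomp g y.
Proof.
have [_ hx ex] := hdecompP x; have [_ hy ey] := hdecompP y.
rewrite {1}ex {1}ey -big_cat hcomp_sum_hom ?big_cat // => p.
by rewrite mem_cat => /orP [/hx | /hy].
Qed.

Lemma hcomp0 g : hcomp g 0 = 0.
Proof. by have := @hcomp_sum_hom [::] g; rewrite !big_nil; apply. Qed.

Lemma hcompN g x : hcomp g (- x) = - hcomp g x.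
Proof. by apply/eqP; rewrite -subr_eq0 opprK -hcompD addNr hcomp0. Qed.

Lemma hcompB g x y : hcomp g (x - y) = hcomp g x - hcomp g y.
Proof. by rewrite hcompD hcompN. Qed.

Lemma hcomp_sum g (I : Type) (r : seq I) (P : pred I) (F : I -> R) :
  hcomp g (\sum_(i <- r | P i) F i) = \sum_(i <- r | P i) hcomp g (F i).
Proof. by apply: (big_morph (hcomp g)); [exact: hcompD | exact: hcomp0]. Qed.

Lemma hcompMl_hom a h g r : hom a h ->
  hcomp g (h * r) = \sum_(b <- hsupp r | a + b == g) h * hcomp b r.
Proof.
move=> hh; rewrite {1}(sum_hcomp r) big_distrr /=.
have := @hcomp_sum_hom [seq (a + b, h * hcomp b r) | b <- hsupp r] g.
rewrite !big_map; apply=> p /mapP [b _ ->] /=.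
exact/Defs.homM/hcomp_is_hom.
Qed.

Lemma hcompM g x y : hcomp g (x * y) =
  \sum_(a <- hsupp x) \sum_(b <- hsupp y | a + b == g) hcomp a x * hcomp b y.
Proof.
rewrite {1}(sum_hcomp x) big_distrl /= hcomp_sum; apply: eq_bigr => a _.
exact/hcompMl_hom/hcomp_is_hom.
Qed.

Lemma hcompMl_hom_factor a h g r : hom a h -> exists q, hcomp g (h * r) = h * q.
Proof. by move=> hh; rewrite (hcompMl_hom g r hh) -big_distrr; eexists. Qed.

Lemma hcompMl_shift (Gc : cancellative G) a h b r :
  hom a h -> hcomp (a + b) (h * r) = h * hcomp b r.
Proof.
move=> hh; rewrite (hcompMl_hom _ r hh) (eq_bigl (fun b' => b' == b)); last first.
  by move=> b' /=; apply/eqP/eqP => [/Gc|->].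
rewrite sum_pred1_seq ?hsupp_uniq //; case: ifP => // bs.
have [->|/hcomp_supp] := eqVneq (hcomp b r) 0; first by rewrite mulr0.
by rewrite bs.
Qed.

Lemma is_componentP a x : is_component gr a x <-> x != 0 /\ exists g, x = hcomp g a.
Proof.
split.
  move=> [s [[us hs ea] /mapP [p ps ->]]]; split; first by case: (hs p ps).
  exists p.1; rewrite ea hcomp_sum_hom; first by rewrite (sum_key_uniq snd).
  by move=> q /hs [].
move=> [nz [g xe]]; subst x.
exists [seq (d, hcomp d a) | d <- hsupp a & hcomp d a != 0]; split.
  split.
  - rewrite -map_comp (@eq_map _ _ _ id) // map_id.
    by rewrite filter_uniq // hsupp_uniq.
  - move=> p /mapP [d]; rewrite mem_filter => /andP [nzd _] -> /=.
    by split => //; apply: hcomp_is_hom.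
  - rewrite big_map big_filter /= big_mkcond /= {1}(sum_hcomp a).
    by apply: eq_bigr => d _; case: eqP.
apply/mapP; exists (g, hcomp g a) => //; apply/mapP; exists g => //.
by rewrite mem_filter nz hcomp_supp.
Qed.

End HomogeneousComponents.

(** * Ideals as predicates *)

Section Ideals.
Variable R : comNzRingType.
Implicit Types (S I J : R -> Prop) (x y : R).

Lemma span_is_ideal S : is_ideal (span S).
Proof.
split.
- by exists [::]; rewrite big_nil.
- move=> x y [s1 [h1 ->]] [s2 [h2 ->]]; exists (s1 ++ s2); split; last by rewrite big_cat.
  by move=> p; rewrite mem_cat => /orP [/h1 | /h2].
- move=> r x [s1 [h1 ->]]; exists [seq (r * p.1, p.2) | p <- s1]; split.
    by move=> p /mapP [q /h1 + ->].
  by rewrite big_map mulr_sumr; apply: eq_bigr => p _; rewrite mulrA.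
Qed.

Lemma span_mem S x : S x -> span S x.
Proof.
move=> Sx; exists [:: (1, x)]; split; last by rewrite big_seq1 mul1r.
by move=> p; rewrite inE => /eqP ->.
Qed.

Lemma span_sub_ideal S I : is_ideal I -> (forall x, S x -> I x) ->
  forall x, span S x -> I x.
Proof.
case=> I0 ID IM hS x [s [hs ->]]; elim: s hs => [|p s IH] hs; first by rewrite big_nil.
rewrite big_cons; apply: ID; first by apply/IM/hS/hs; exact: mem_head.
by apply: IH => q qs; apply: hs; rewrite inE qs orbT.
Qed.

Lemma span1P u x : span (fun z => z = u) x -> exists r, x = r * u.
Proof.
move=> [l [hl ->]]; elim: l hl => [|p l IH] hl; first by exists 0; rewrite big_nil mul0r.
have [r e] : exists r, \sum_(p <- l) p.1 * p.2 = r * u.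
  by apply: IH => q ql; apply: hl; rewrite inE ql orbT.
by rewrite big_cons e (hl p (mem_head _ _)); exists (p.1 + r); rewrite mulrDl.
Qed.

Lemma span2P u v x : span (fun z => z = u \/ z = v) x ->
  exists r s, x = r * u + s * v.
Proof.
move=> [l [hl ->]]; elim: l hl => [|p l IH] hl.
  by exists 0, 0; rewrite big_nil !mul0r addr0.
have [r [s e]] : exists r s, \sum_(p <- l) p.1 * p.2 = r * u + s * v.
  by apply: IH => q ql; apply: hl; rewrite inE ql orbT.
rewrite big_cons e; case: (hl p (mem_head _ _)) => ->.
  by exists (p.1 + r), s; rewrite mulrDl addrA.
by exists r, (p.1 + s); rewrite mulrDl addrCA addrA.
Qed.

Lemma ideal0 I : is_ideal I -> I 0.
Proof. by case. Qed.

Lemma idealD I x y : is_ideal I -> I x -> I y -> I (x + y).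
Proof. by case=> _ + _; apply. Qed.

Lemma idealM I r x : is_ideal I -> I x -> I (r * x).
Proof. by case=> _ _; apply. Qed.

Lemma idealN I x : is_ideal I -> I x -> I (- x).
Proof. by move=> hI hx; rewrite -mulN1r; apply: idealM. Qed.

Lemma idealB I x y : is_ideal I -> I x -> I y -> I (x - y).
Proof. by move=> hI hx hy; apply: idealD => //; apply: idealN. Qed.

Lemma ideal_big I (T : Type) (r : seq T) (P : pred T) (F : T -> R) :
  is_ideal I -> (forall i, P i -> I (F i)) -> I (\sum_(i <- r | P i) F i).
Proof. by move=> hI hF; apply: (big_ind I) => //; [exact: ideal0 | move=> x y; exact: idealD]. Qed.

Lemma zero_is_ideal : is_ideal (@zero_ideal R).
Proof.
split; rewrite /zero_ideal //; first by move=> x y -> ->; rewrite addr0.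
by move=> r x ->; rewrite mulr0.
Qed.

Lemma preimage_mulr_is_ideal I y : is_ideal I -> is_ideal (fun x => I (x * y)).
Proof.
move=> hI; split; first by rewrite mul0r; apply: ideal0.
  by move=> a b ha hb; rewrite mulrDl; apply: idealD.
by move=> r x hx; rewrite -mulrA; apply: idealM.
Qed.

Lemma preimage_mull_is_ideal I y : is_ideal I -> is_ideal (fun x => I (y * x)).
Proof.
move=> hI; split; first by rewrite mulr0; apply: ideal0.
  by move=> a b ha hb; rewrite mulrDr; apply: idealD.
by move=> r x hx; rewrite mulrCA; apply: idealM.
Qed.

Definition sum_ideals (L : seq (R -> Prop)) : R -> Prop :=
  foldr (@ideal_sum R) (@zero_ideal R) L.

Lemma sum_ideals_is_ideal L : is_ideal (sum_ideals L).
Proof. by case: L => [|I L]; [exact: zero_is_ideal | exact: span_is_ideal]. Qed.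

Lemma sum_ideals_mem L k x : (k < size L)%N -> nth (@zero_ideal R) L k x ->
  sum_ideals L x.
Proof.
elim: L k => // I L IH k /= hk hx; apply: span_mem.
by case: k hk hx => [|k] /= hk hx; [left | right; exact: IH hk hx].
Qed.

Lemma sum_ideals_sub L J : is_ideal J ->
  (forall k x, (k < size L)%N -> nth (@zero_ideal R) L k x -> J x) ->
  forall x, sum_ideals L x -> J x.
Proof.
move=> hJ; elim: L => [|I L IH] hL x /=; first by rewrite /zero_ideal => ->; apply: ideal0.
apply: span_sub_ideal => // y [Iy|Ly]; first exact: (hL 0%N).
by apply: IH => // k z hk hz; apply: (hL k.+1).
Qed.

Lemma ideal_prod_sub I J K : is_ideal K ->
  (forall x y, I x -> J y -> K (x * y)) -> forall z, ideal_prod I J z -> K z.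
Proof. by move=> hK h; apply: span_sub_ideal => // z [x [y [Ix Jy ->]]]; apply: h. Qed.

Lemma ideal_prod_mem I J x y : I x -> J y -> ideal_prod I J (x * y).
Proof. by move=> Ix Jy; apply: span_mem; exists x, y. Qed.

End Ideals.

Section Content.
Variables (G : nmodType) (R : idomainType) (gr : grading G R).
Local Notation hcomp := (hcomp gr).
Local Notation hsupp := (hsupp gr).
Local Notation Af := (Af gr).
Implicit Types (f : {poly R}) (J : R -> Prop).

Lemma Cont_hcomp a g : Cont gr a (hcomp g a).
Proof.
have [->|nz] := eqVneq (hcomp g a) 0; first exact: ideal0 (span_is_ideal _).
by apply/span_mem/is_componentP; split => //; exists g.
Qed.

Lemma Cont_sub a J : is_ideal J -> (forall g, J (hcomp g a)) ->
  forall x, Cont gr a x -> J x.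
Proof. by move=> hJ h; apply: span_sub_ideal => // y /is_componentP [_ [g ->]]. Qed.

Lemma Af_is_ideal f : is_ideal (Af f).
Proof. exact: sum_ideals_is_ideal. Qed.

Lemma Af_hcomp f i g : Af f (hcomp g f`_i).
Proof.
have [hi|hi] := ltnP i (size f); last first.
  by rewrite nth_default // hcomp0; exact: ideal0 (Af_is_ideal f).
apply: (@sum_ideals_mem _ _ i); first by rewrite size_map size_iota.
by rewrite (nth_map 0%N) ?size_iota // nth_iota // add0n; apply: Cont_hcomp.
Qed.

Lemma Af_sub f J : is_ideal J -> (forall i g, J (hcomp g f`_i)) ->
  forall x, Af f x -> J x.
Proof.
move=> hJ h; apply: sum_ideals_sub => // k x; rewrite size_map size_iota => hk.
rewrite (nth_map 0%N) ?size_iota // nth_iota // add0n.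
exact: Cont_sub.
Qed.

Lemma Af_coef f i : Af f f`_i.
Proof.
rewrite [X in Af f X](sum_hcomp gr); apply: ideal_big; first exact: Af_is_ideal.
by move=> g _; apply: Af_hcomp.
Qed.

Lemma Af_hcomp_closed f x g : Af f x -> Af f (hcomp g x).
Proof.
pose J x := forall g, Af f (hcomp g x).
have hA := Af_is_ideal f.
have hJ : is_ideal J.
  split; rewrite /J.
  - by move=> g'; rewrite hcomp0; apply: ideal0.
  - by move=> a b ha hb g'; rewrite hcompD; apply: idealD.
  - move=> r a ha g'; rewrite hcompM; apply: ideal_big => // b _.
    by apply: ideal_big => // c _; apply: idealM.
move=> hx; apply: (Af_sub hJ) hx g => i g1 g2.
rewrite (hcompE_hom _ (hcomp_is_hom gr g1 f`_i)).
by case: eqP => _; [exact: Af_hcomp | exact: ideal0].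
Qed.

Lemma Af_homogeneous f : homogeneous_ideal gr (Af f).
Proof.
by split; [exact: Af_is_ideal | move=> a x Ha /is_componentP [_ [g ->]]; apply: Af_hcomp_closed].
Qed.

Lemma Af_fin_gen f : fin_gen (Af f).
Proof.
exists [seq hcomp g f`_i | i <- iota 0 (size f), g <- hsupp f`_i] => x; split.
  apply: Af_sub; first exact: span_is_ideal.
  move=> i g; have [hi|hi] := ltnP i (size f); last first.
    by rewrite nth_default // hcomp0; exact: ideal0 (span_is_ideal _).
  have [->|/hcomp_supp gs] := eqVneq (hcomp g f`_i) 0.
    exact: ideal0 (span_is_ideal _).
  by apply/span_mem/allpairsPdep; exists i, g; rewrite mem_iota.
apply: span_sub_ideal; first exact: Af_is_ideal.
by move=> y /allpairsPdep [i [g [_ _ ->]]]; apply: Af_hcomp.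
Qed.

Lemma Af_mul_sub_prod f (g : {poly R}) x : Af (f * g) x -> ideal_prod (Af f) (Af g) x.
Proof.
have hP := span_is_ideal (fun z => exists x y, [/\ Af f x, Af g y & z = x * y]).
apply: Af_sub => // k c; rewrite coefM hcomp_sum; apply: ideal_big => // i _.
rewrite hcompM; apply: ideal_big => // a _; apply: ideal_big => // b _.
exact/ideal_prod_mem/Af_hcomp/Af_hcomp.
Qed.

End Content.

(** * Invertible ideals *)

Section ColonIdeals.
Variables (R : idomainType) (K : fieldType) (tf : {rmorphism R -> K}).
Hypothesis tf_inj : injective tf.

Definition in_ring (x : K) := exists r, x = tf r.

Lemma in_ring_tf r : in_ring (tf r). Proof. by exists r. Qed.

Lemma in_ring0 : in_ring 0. Proof. by exists 0; rewrite rmorph0. Qed.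

Lemma in_ring1 : in_ring 1. Proof. by exists 1; rewrite rmorph1. Qed.

Lemma in_ringD x y : in_ring x -> in_ring y -> in_ring (x + y).
Proof. by move=> [a ->] [b ->]; exists (a + b); rewrite rmorphD. Qed.

Lemma in_ringM x y : in_ring x -> in_ring y -> in_ring (x * y).
Proof. by move=> [a ->] [b ->]; exists (a * b); rewrite rmorphM. Qed.

Lemma in_ring_sum (T : Type) (r : seq T) (P : pred T) (F : T -> K) :
  (forall i, P i -> in_ring (F i)) -> in_ring (\sum_(i <- r | P i) F i).
Proof. by move=> h; apply: (big_ind in_ring) => //; [exact: in_ring0 | exact: in_ringD]. Qed.

Lemma tf_neq0 a : a != 0 -> tf a != 0.
Proof. by apply: contra; rewrite -(rmorph0 tf) (inj_eq tf_inj). Qed.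

Definition colon (L : seq R) (t : K) := forall x, x \in L -> in_ring (t * tf x).

(* The ideal generated by [L] times its colon ideal contains [1], i.e. the
   ideal generated by [L] is invertible. *)
Definition invertible_gens (L : seq R) := exists s : seq (K * R),
  (forall q, q \in s -> q.2 \in L /\ colon L q.1) /\ \sum_(q <- s) q.1 * tf q.2 = 1.

Lemma colon_span L t x : colon L t -> span (fun y => y \in L) x -> in_ring (tf x * t).
Proof.
move=> ht; have hI : is_ideal (fun x => in_ring (tf x * t)).
  split.
  - by rewrite rmorph0 mul0r; apply: in_ring0.
  - by move=> a c ha hc; rewrite rmorphD mulrDl; apply: in_ringD.
  - by move=> r a ha; rewrite rmorphM -mulrA; apply: in_ringM => //; apply: in_ring_tf.
by apply: (span_sub_ideal hI) => y yL; rewrite mulrC; apply: ht.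
Qed.

Lemma invertible_gens1 a : a != 0 -> invertible_gens [:: a].
Proof.
move=> a0; have A0 := tf_neq0 a0.
exists [:: ((tf a)^-1, a)]; split; last by rewrite big_seq1 /= mulVf.
move=> q; rewrite inE => /eqP -> /=; split; first exact: mem_head.
by move=> x; rewrite inE => /eqP ->; rewrite mulVf //; apply: in_ring1.
Qed.

Lemma invertible_gens2 a b r s y y' : a != 0 -> b != 0 ->
  a * b = r * (a * a) + s * (b * b) -> r * a = b * y -> s * b = a * y' ->
  invertible_gens [:: a; b].
Proof.
move=> a0 b0 e ey ey'; have A0 := tf_neq0 a0; have B0 := tf_neq0 b0.
have e1 : tf a * tf b = tf r * (tf a * tf a) + tf s * (tf b * tf b).
  by rewrite -!rmorphM -rmorphD e.
have e2 : tf r / tf b * tf a = tf y.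
  by apply: (mulfI B0); rewrite -!rmorphM -ey rmorphM; field.
have e3 : tf s / tf a * tf b = tf y'.
  by apply: (mulfI A0); rewrite -!rmorphM -ey' rmorphM; field.
have e4 : tf r / tf b * tf b = tf r by field.
have e5 : tf s / tf a * tf a = tf s by field.
exists [:: (tf r / tf b, a); (tf s / tf a, b)]; split.
  move=> q; rewrite !inE => /orP [] /eqP -> /=.
    split; first by rewrite eqxx.
    by move=> x; rewrite !inE => /orP [] /eqP ->; rewrite ?e2 ?e4; apply: in_ring_tf.
  split; first by rewrite eqxx orbT.
  by move=> x; rewrite !inE => /orP [] /eqP ->; rewrite ?e3 ?e5; apply: in_ring_tf.
rewrite big_cons big_seq1 /=.
have -> : tf r / tf b * tf a + tf s / tf a * tf b =
  (tf r * (tf a * tf a) + tf s * (tf b * tf b)) / (tf a * tf b).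
  by field; rewrite A0 B0.
by rewrite -e1 divff // mulf_neq0.
Qed.

Lemma in_ring_mul3 x y z : in_ring x -> in_ring y -> in_ring z -> in_ring (x * y * z).
Proof. by move=> hx hy hz; apply: in_ringM => //; apply: in_ringM. Qed.

Section ThreeInverses.
Variables (b c : R) (A : seq R) (t1 t2 t3 : K).
Hypotheses (h1 : colon (b :: A) t1) (h2 : colon (c :: A) t2) (h3 : colon [:: b; c] t3).

Lemma colon_cons2_pivot y1 y2 : y1 \in b :: A -> y2 \in c :: A ->
  (y1 == b) || (y2 == c) -> colon [:: b, c & A] (t1 * tf y1 * (t2 * tf y2) * t3).
Proof.
move=> y1L y2L hbc x; rewrite inE => /predU1P [-> | ].
  by rewrite -mulrA; apply: in_ring_mul3; [exact: h1 | exact: h2 | apply: h3; rewrite !inE eqxx].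
rewrite inE => /predU1P [-> | xA].
  by rewrite -mulrA; apply: in_ring_mul3; [exact: h1 | exact: h2 | apply: h3; rewrite !inE eqxx orbT].
case/orP: hbc => /eqP ->.
  rewrite (_ : _ * tf x = t1 * tf x * (t2 * tf y2) * (t3 * tf b)); last by ring.
  by apply: in_ring_mul3; [apply: h1; rewrite inE xA orbT | exact: h2 | exact/h3/mem_head].
rewrite (_ : _ * tf x = t1 * tf y1 * (t2 * tf x) * (t3 * tf c)); last by ring.
by apply: in_ring_mul3; [exact: h1 | apply: h2; rewrite inE xA orbT | apply: h3; rewrite !inE eqxx orbT].
Qed.

Lemma colon_cons2_tail y2 y3 : y2 \in A -> y3 \in [:: b; c] ->
  colon [:: b, c & A] (t1 * (t2 * tf y2) * (t3 * tf y3)).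
Proof.
move=> y2A y3L x; have u3 := h3 y3L.
rewrite inE => /predU1P [-> | ].
  rewrite (_ : _ * tf b = t1 * tf b * (t2 * tf y2) * (t3 * tf y3)); last by ring.
  by apply: in_ring_mul3 => //; [exact/h1/mem_head | apply: h2; rewrite inE y2A orbT].
rewrite inE => /predU1P [-> | xA].
  rewrite (_ : _ * tf c = t1 * tf y2 * (t2 * tf c) * (t3 * tf y3)); last by ring.
  by apply: in_ring_mul3 => //; [apply: h1; rewrite inE y2A orbT | exact/h2/mem_head].
rewrite (_ : _ * tf x = t1 * tf x * (t2 * tf y2) * (t3 * tf y3)); last by ring.
by apply: in_ring_mul3 => //; [apply: h1 | apply: h2]; rewrite inE ?xA ?y2A orbT.
Qed.

End ThreeInverses.

(* Expanding [1 = 1 * 1 * 1] over the three partitions of unity, every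
   product term is charged either to [b] or [c] (when the first two factors
   use [b] resp. [c]) or to a generator from [A]. *)
Lemma invertible_gens_cons2 b c A : invertible_gens (b :: A) ->
  invertible_gens (c :: A) -> invertible_gens [:: b; c] -> invertible_gens [:: b, c & A].
Proof.
move=> [s1 [h1 E1]] [s2 [h2 E2]] [s3 [h3 E3]].
pose F (q1 q2 q3 : K * R) : K * R :=
  if (q1.2 == b) || (q2.2 == c) then (q1.1 * tf q1.2 * (q2.1 * tf q2.2) * q3.1, q3.2)
  else (q1.1 * (q2.1 * tf q2.2) * (q3.1 * tf q3.2), q1.2).
exists [seq F q1 q23.1 q23.2 | q1 <- s1, q23 <- [seq (q2, q3) | q2 <- s2, q3 <- s3]].
split.
  move=> q /allpairsPdep [q1 [q23 [q1s /allpairsP [[q2 q3] [/= q2s q3s ->]] ->]]] /=.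
  have [m1 c1] := h1 q1 q1s; have [m2 c2] := h2 q2 q2s; have [m3 c3] := h3 q3 q3s.
  rewrite /F; case: ifP => hbc /=.
    split; last exact: colon_cons2_pivot.
    by move: m3; rewrite !inE => /orP [] ->; rewrite ?orbT.
  move/negbT: hbc; rewrite negb_or => /andP [nb nc].
  have q1A : q1.2 \in A by move: m1; rewrite inE (negbTE nb).
  have q2A : q2.2 \in A by move: m2; rewrite inE (negbTE nc).
  by split; [rewrite !inE q1A !orbT | exact: colon_cons2_tail].
have -> : 1 = (\sum_(q <- s1) q.1 * tf q.2) * (\sum_(q <- s2) q.1 * tf q.2) *
   (\sum_(q <- s3) q.1 * tf q.2) by rewrite E1 E2 E3 !mul1r.
rewrite big_allpairs_dep -mulrA big_distrl /=.
apply: eq_bigr => q1 _; rewrite big_allpairs /= big_distrl /= big_distrr /=.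
apply: eq_bigr => q2 _; rewrite !big_distrr /=; apply: eq_bigr => q3 _.
by rewrite /F; case: ifP => _ /=; ring.
Qed.

Lemma invertible_gens_pairwise (L : seq R) : L != [::] -> {in L, forall x, x != 0} ->
  {in L &, forall a b, invertible_gens [:: a; b]} -> invertible_gens L.
Proof.
move: {2}(size L) (leqnn (size L)) => n.
elim: n L => [|n IH] [|b [|c A]] //= hs _ nz h2; first exact/invertible_gens1/nz/mem_head.
have sub_b : {subset b :: A <= [:: b, c & A]}.
  by move=> x; rewrite !inE => /orP [] ->; rewrite ?orbT.
have sub_c : {subset c :: A <= [:: b, c & A]}.
  by move=> x; rewrite !inE => /orP [] ->; rewrite ?orbT.
apply: invertible_gens_cons2; last by apply: h2; rewrite !inE eqxx ?orbT.
  by apply: IH => //; [exact: sub_in1 nz | exact: sub_in2 h2].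
by apply: IH => //; [exact: sub_in1 nz | exact: sub_in2 h2].
Qed.

End ColonIdeals.

Section FractionField.
Variable R : idomainType.
Local Notation tf := (@FracField.tofrac R).

Lemma tofrac_inj : injective tf.
Proof. by move=> x y /eqP; rewrite tofrac_eq => /eqP. Qed.

Lemma invertible_gens_ideal (I : R -> Prop) (L : seq R) :
  ideal_eq I (span (fun x => x \in L)) -> invertible_gens tf L ->
  (exists x, x \in L /\ x != 0) -> invertible_ideal I.
Proof.
move=> hIL [s [hs E]] [d [dL d0]]; exists (colon tf L); split.
- by move=> x _; rewrite mul0r; apply: in_ring0.
- by move=> x y hx hy z hz; rewrite mulrDl; apply: in_ringD; [apply: hx | apply: hy].
- by move=> r x hx z hz; rewrite -mulrA; apply: in_ringM; [apply: in_ring_tf | apply: hx].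
- by exists d; split => // x hx; rewrite mulrC; apply: hx.
move=> k; split.
  move=> [s' [hs' ->]]; rewrite big_seq; apply: in_ring_sum => p ps.
  by have [/hIL Ip Jp] := hs' p ps; apply: colon_span Jp _.
move=> [r ->]; exists [seq (r * q.2, q.1) | q <- s]; split.
  move=> p /mapP [q qs ->] /=; have [qL qc] := hs q qs; split => //.
  by apply/hIL; apply: idealM; [exact: span_is_ideal | exact: span_mem].
rewrite big_map /= -[tf r]mulr1 -E mulr_sumr; apply: eq_bigr => q _.
by rewrite rmorphM -mulrA [tf q.2 * _]mulrC.
Qed.

End FractionField.

(** * From the content formula to graded-Prüfer *)

Section ContentFormulaToPrufer.
Variables (G : nmodType) (R : idomainType) (gr : grading G R).
Local Notation hom := (Defs.hom gr).
Local Notation hcomp := (hcomp gr).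
Local Notation hsupp := (hsupp gr).
Local Notation Af := (Af gr).
Local Notation tf := (@FracField.tofrac R).

Definition hgens (s : seq R) : seq R :=
  flatten [seq [seq hcomp g x | g <- hsupp x & hcomp g x != 0] | x <- s].

Lemma hgensP s y : y \in hgens s -> y != 0 /\ exists g x, x \in s /\ y = hcomp g x.
Proof.
move=> /flatten_mapP [x xs] /mapP [g]; rewrite mem_filter => /andP [nz _] ->.
by split => //; exists g, x.
Qed.

Lemma homogeneous_span_hgens (I : R -> Prop) s : homogeneous_ideal gr I ->
  ideal_eq I (span (fun x => x \in s)) -> ideal_eq I (span (fun y => y \in hgens s)).
Proof.
move=> [hI hc] hs z; split.
  move/hs; apply: span_sub_ideal; first exact: span_is_ideal.
  move=> x xs; rewrite (sum_hcomp gr x) (bigID (fun g => hcomp g x != 0)) /=.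
  rewrite [X in _ + X]big1 ?addr0; last by move=> g /negPn /eqP.
  apply: ideal_big; first exact: span_is_ideal.
  move=> g nz; apply/span_mem/flatten_mapP; exists x => //.
  by apply/mapP; exists g => //; rewrite mem_filter nz hcomp_supp.
apply: span_sub_ideal => // y /hgensP [nz [g [x [xs ey]]]]; subst y.
apply: (hc x); first exact/(hs x)/span_mem.
by apply/is_componentP; split => //; exists g.
Qed.

Lemma span_hcomp_hom a x g : hom a x -> span (fun z => z = x) (hcomp g x).
Proof.
move=> hx; rewrite (hcompE_hom _ hx).
by case: eqP => _; [exact: span_mem | exact: ideal0 (span_is_ideal _)].
Qed.

Hypothesis content_formula : forall f g : {poly R},
  ideal_eq (ideal_prod (Af f) (Af g)) (Af (f * g)).

(* Apply the content formula to [a + b X] and [a - b X]. *)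
Lemma mul_mem_span_squares a b al be : hom al a -> hom be b ->
  exists r s, a * b = r * (a * a) + s * (b * b).
Proof.
move=> ha hb; pose f := a%:P + b%:P * 'X; pose g := a%:P - b%:P * 'X.
have Afa : Af f a by have := Af_coef gr f 0; rewrite coefD coefC coefMX /= addr0.
have Agb : Af g b.
  have := Af_coef gr g 1; rewrite coefB coefC coefMX /= coefC /= sub0r.
  by move/(idealN (Af_is_ideal gr g)); rewrite opprK.
have := (content_formula f g (a * b)).1 (ideal_prod_mem Afa Agb).
have -> : f * g = (a * a)%:P - (b * b)%:P * 'X^2 by rewrite /f /g !polyCM; ring.
pose S z := z = a * a \/ z = b * b; have hS := span_is_ideal S.
move=> H; apply: span2P; apply: (Af_sub hS) H => i h.
rewrite coefB coefC coefCM coefXn hcompB; apply: idealB => //.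
  case: eqP => _; last by rewrite hcomp0; apply: ideal0.
  apply: (span_sub_ideal hS (S := fun z => z = a * a)); last first.
    exact: span_hcomp_hom (Defs.homM ha ha).
  by move=> z ->; apply: span_mem; left.
case: eqP => _; last by rewrite mulr0 hcomp0; apply: ideal0.
rewrite mulr1; apply: (span_sub_ideal hS (S := fun z => z = b * b)); last first.
  exact: span_hcomp_hom (Defs.homM hb hb).
by move=> z ->; apply: span_mem; right.
Qed.

(* With [f = b X - r a] and [g = b X + (r a - b)] one gets
   [f g = b^2 (X^2 - X + r s)], so [(r a)^2] lies in [b^2 R]. *)
Lemma dvd_of_mul_mem_squares a b r s al be : hom al a -> hom be b -> b != 0 ->
  a * b = r * (a * a) + s * (b * b) -> exists y, r * a = b * y.
Proof.
move=> ha hb b0 e.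
pose f := b%:P * 'X - (r * a)%:P; pose g := b%:P * 'X + (r * a - b)%:P.
have Afr : Af f (r * a).
  have := Af_coef gr f 0; rewrite coefB coefMX !coefC /= sub0r.
  by move/(idealN (Af_is_ideal gr f)); rewrite opprK.
have Agr : Af g (r * a).
  have := idealD (Af_is_ideal gr g) (Af_coef gr g 0) (Af_coef gr g 1).
  by rewrite !coefD !coefMX !coefC /= add0r addr0 subrK.
have := (content_formula f g _).1 (ideal_prod_mem Afr Agr).
have -> : f * g = (b * b)%:P * ('X^2 - 'X + (r * s)%:P).
  have e' : r * a * b - r * a * (r * a) = r * s * (b * b).
    transitivity (r * (a * b - r * (a * a))); first by ring.
    by rewrite e; ring.
  transitivity ((b * b)%:P * 'X^2 - (b * b)%:P * 'X + (r * s * (b * b))%:P);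
    last by rewrite !polyCM; ring.
  by rewrite -e' /f /g !(rmorphB, rmorphM) /=; ring.
move=> H; have hS := span_is_ideal (fun z => z = b * b).
have /span1P [w ew] : span (fun z => z = b * b) (r * a * (r * a)).
  apply: (Af_sub hS) H => i h; rewrite coefCM.
  have [q ->] := hcompMl_hom_factor h (('X^2 - 'X + (r * s)%:P)`_i) (Defs.homM hb hb).
  by rewrite [_ * q]mulrC; apply: idealM; [exact: hS | exact: span_mem].
exists (w + r * s); apply: (mulfI b0).
transitivity (r * (a * b)); first by ring.
by rewrite e; transitivity (r * a * (r * a) + r * s * (b * b)); [ring | rewrite ew; ring].
Qed.

Lemma invertible_gens_hom2 a b al be : hom al a -> hom be b -> a != 0 -> b != 0 ->
  invertible_gens tf [:: a; b].
Proof.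
move=> ha hb a0 b0; have [r [s e]] := mul_mem_span_squares ha hb.
have [y ey] := dvd_of_mul_mem_squares ha hb b0 e.
have e' : b * a = s * (b * b) + r * (a * a) by rewrite mulrC e addrC.
have [y' ey'] := dvd_of_mul_mem_squares hb ha a0 e'.
exact: (invertible_gens2 (@tofrac_inj R) a0 b0 e ey ey').
Qed.

Lemma graded_Prufer_of_content_formula : graded_Prufer gr.
Proof.
move=> I hI [s hs] [x0 [Ix0 x00]].
have hIL := homogeneous_span_hgens hI hs; set L := hgens s in hIL.
have [y yL] : exists y, y \in L.
  case: L hIL => [|y l] hIL; last by exists y; exact: mem_head.
  have [[|p l] [hl el]] := (hIL x0).1 Ix0; last by have := hl p (mem_head _ _).
  by rewrite el big_nil eqxx in x00.
apply: (invertible_gens_ideal hIL); last by exists y; split; [|case: (hgensP yL)].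
apply: (invertible_gens_pairwise (@tofrac_inj R)); first by case: (L) yL.
  by move=> z /hgensP [].
move=> a b /hgensP [a0 [ga [xa [_ ea]]]] /hgensP [b0 [gb [xb [_ eb]]]].
by apply: (invertible_gens_hom2 _ _ a0 b0); [rewrite ea | rewrite eb]; apply: hcomp_is_hom.
Qed.

End ContentFormulaToPrufer.
(** * Orders on torsion-free monoids *)

Lemma rsubmxD m n1 n2 (A B : 'M[int]_(m, n1 + n2)) :
  rsubmx (A + B) = rsubmx A + rsubmx B.
Proof. by rewrite -{1}(hsubmxK A) -{1}(hsubmxK B) add_row_mx row_mxKr. Qed.

Lemma rsubmxN m n1 n2 (A : 'M[int]_(m, n1 + n2)) : rsubmx (- A) = - rsubmx A.
Proof. by rewrite -{1}(hsubmxK A) opp_row_mx row_mxKr. Qed.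

Lemma row_mx0_rsubmx n (z : 'rV[int]_(1 + n)) : z 0 0 = 0 -> row_mx 0 (rsubmx z) = z.
Proof.
move=> z0; rewrite -[RHS]hsubmxK; congr row_mx.
apply/matrixP => i j; rewrite (ord1 i) (ord1 j) !mxE.
by have -> : lshift n (0 : 'I_1) = 0 by apply/val_inj.
Qed.

Lemma mxMn_entry m n (A : 'M[int]_(m, n)) k i j : (A *+ k) i j = A i j *+ k.
Proof. by elim: k => [|k IH]; rewrite ?mulr0n ?mxE // !mulrS mxE IH. Qed.

Section Cones.
Variable n : nat.
Implicit Types (L P : 'rV[int]_n -> Prop).

Definition pure_subgroup L :=
  [/\ L 0, forall x y, L x -> L y -> L (x - y) & forall m x, L (x *+ m.+1) -> L x].

(* [P] is a cone whose preorder [P (y - x)] is total, with equivalence [L]. *)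
Definition total_cone L P := [/\ forall x y, P x -> P y -> P (x + y),
  forall x, P x \/ P (- x) & forall x, P x /\ P (- x) <-> L x].

Variable L : 'rV[int]_n -> Prop.
Hypothesis hL : pure_subgroup L.

Lemma pure_subgroupN x : L x -> L (- x).
Proof. by case: hL => L0 LB _ h; rewrite -sub0r; apply: LB. Qed.

Lemma pure_subgroupD x y : L x -> L y -> L (x + y).
Proof.
by case: hL => _ LB _ hx hy; rewrite -[y]opprK; apply/LB/pure_subgroupN.
Qed.

Lemma pure_subgroupMn x k : L x -> L (x *+ k).
Proof.
case: hL => L0 _ _ hx; elim: k => [|k IH]; first by rewrite mulr0n.
by rewrite mulrS; apply: pure_subgroupD.
Qed.

Lemma pure_subgroupZ x (k : int) : L x -> L (k *: x).
Proof.
move=> hx; case: k => k; first by rewrite -natz scaler_nat; apply: pure_subgroupMn.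
by rewrite NegzE scaleNr -natz scaler_nat; apply/pure_subgroupN/pure_subgroupMn.
Qed.

End Cones.

Section ConeStep.
Variables (n : nat) (L : 'rV[int]_(1 + n) -> Prop) (P' : 'rV[int]_n -> Prop).
Hypothesis hL : pure_subgroup L.

Definition slice0 (y : 'rV[int]_n) := L (row_mx 0 y).

Lemma slice0_pure : pure_subgroup slice0.
Proof.
have [L0 LB LS] := hL; split; rewrite /slice0.
- by rewrite row_mx0.
- by move=> x y hx hy; have := LB _ _ hx hy; rewrite opp_row_mx add_row_mx subrr.
- move=> m x h; apply: (LS m).
  suff -> : row_mx (0 : 'rV_1) x *+ m.+1 = row_mx 0 (x *+ m.+1) by [].
  by elim: m.+1 => [|k IH]; rewrite ?mulr0n ?row_mx0 // !mulrS IH add_row_mx addr0.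
Qed.

Hypothesis hP' : total_cone slice0 P'.

(* Eliminating the first coordinate against [w \in L] maps [L] into
   [slice0] up to the factor [w 0 0], which purity removes. *)
Lemma total_cone_pivot w : L w -> 0 < w 0 0 ->
  total_cone L (fun z => P' (rsubmx (w 0 0 *: z - z 0 0 *: w))).
Proof.
move=> Lw m0; have [P'D P'N P'L] := hP'; set m := w 0 0 in m0 *.
pose psi (z : 'rV[int]_(1 + n)) := rsubmx (m *: z - z 0 0 *: w).
have psiD x y : psi (x + y) = psi x + psi y.
  by rewrite /psi -rsubmxD mxE scalerDr scalerDl opprD addrACA.
have psiN x : psi (- x) = - psi x.
  by rewrite /psi -rsubmxN mxE scalerN scaleNr opprD opprK.
have psiL z : row_mx 0 (psi z) = m *: z - z 0 0 *: w.
  by apply: row_mx0_rsubmx; rewrite !mxE [_ * w 0 0]mulrC subrr.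
split.
- by move=> x y hx hy; rewrite -/(psi _) psiD; apply: P'D.
- by move=> x; rewrite -!/(psi _) psiN; apply: P'N.
move=> z; rewrite -!/(psi _) psiN P'L /slice0 psiL; split => h; last first.
  apply: (pure_subgroupD hL); first exact: pure_subgroupZ.
  by apply: (pure_subgroupN hL); apply: pure_subgroupZ.
have [k mk] : exists k, m = k.+1%:R.
  by exists `|m|.-1; rewrite prednK ?absz_gt0 ?gt_eqF // natz gtz0_abs.
have [_ _ LS] := hL; apply: (LS k); rewrite -scaler_nat -mk.
rewrite -(subrK (z 0 0 *: w) (m *: z)).
by apply: (pure_subgroupD hL h); apply: pure_subgroupZ.
Qed.

Lemma total_cone_lex : (forall w, L w -> w 0 0 = 0) ->
  total_cone L (fun z => 0 < z 0 0 \/ z 0 0 = 0 /\ P' (rsubmx z)).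
Proof.
move=> hA; have [P'D P'N P'L] := hP'; split.
- move=> x y; rewrite mxE rsubmxD => -[hx|[hx px]] [hy|[hy py]].
  + by left; apply: addr_gt0.
  + by left; rewrite hy addr0.
  + by left; rewrite hx add0r.
  + by right; split; [rewrite hx hy addr0 | apply: P'D].
- move=> x; rewrite mxE rsubmxN oppr_gt0.
  have [h|h|h] := ltrgtP 0 (x 0 0); [by left; left | by right; left |].
  by case: (P'N (rsubmx x)) => hp; [left | right; rewrite -h oppr0]; right.
move=> x; rewrite mxE rsubmxN oppr_gt0; split.
  case=> [[h1|[h1 p1]] [h2|[h2 p2]]].
  - by move: (lt_trans h2 h1); rewrite ltxx.
  - by move/eqP: h2; rewrite oppr_eq0 => /eqP h2; rewrite h2 ltxx in h1.
  - by rewrite h1 ltxx in h2.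
  - by rewrite -(row_mx0_rsubmx h1); apply/P'L.
move=> Lx; have x0 := hA x Lx.
have /P'L [p1 p2] : slice0 (rsubmx x) by rewrite /slice0 row_mx0_rsubmx.
by rewrite x0 oppr0; split; right.
Qed.

End ConeStep.

Lemma pure_subgroup_cone n (L : 'rV[int]_n -> Prop) :
  pure_subgroup L -> exists P, total_cone L P.
Proof.
elim: n L => [|n IH] L hL.
  exists (fun _ => True); split=> // x; first by left.
  by split=> // _; rewrite (thinmx0 x); case: hL.
move: L hL; rewrite -[n.+1]/(1 + n)%N => L hL.
have [P' hP'] := IH _ (slice0_pure hL).
have [[w [Lw w0]] | nA] := pselect (exists w, L w /\ w 0 0 != 0); last first.
  have hA w : L w -> w 0 0 = 0.
    by move=> Lw; apply/eqP/negP => w0; apply: nA; exists w; split => //; apply/negP.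
  exact: ex_intro (total_cone_lex hP' hA).
have [w' [Lw' m0]] : exists w', L w' /\ 0 < w' 0 0.
  have [h|h|h] := ltrgtP 0 (w 0 0); first by exists w.
    by exists (- w); split; [apply: pure_subgroupN | rewrite mxE oppr_gt0].
  by move: w0; rewrite -h eqxx.
exact: ex_intro (total_cone_pivot hL hP' Lw' m0).
Qed.

Definition zpos (k : int) : nat := if 0 <= k then `|k|%N else 0%N.
Definition zneg (k : int) : nat := if 0 <= k then 0%N else `|k|%N.

Lemma zposnegE k : (zpos k)%:Z - (zneg k)%:Z = k.
Proof. by case: k => n; rewrite /zpos /zneg /= ?subr0 // sub0r NegzE. Qed.

Lemma zposnegB x y :
  (zpos (x - y) + zneg x + zpos y = zneg (x - y) + zpos x + zneg y)%N.
Proof. have := zposnegE x; have := zposnegE y; have := zposnegE (x - y); lia. Qed.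

Lemma zposMn a m : zpos (a * m.+1%:R) = (zpos a * m.+1)%N.
Proof.
by rewrite /zpos pmulr_lge0 ?ltr0Sn //; case: ifP; rewrite ?abszM ?natz ?absz_nat.
Qed.

Lemma znegMn a m : zneg (a * m.+1%:R) = (zneg a * m.+1)%N.
Proof.
by rewrite /zneg pmulr_lge0 ?ltr0Sn //; case: ifP; rewrite ?abszM ?natz ?absz_nat.
Qed.

Lemma zposD a b : 0 <= a -> 0 <= b -> zpos (a + b) = (zpos a + zpos b)%N.
Proof. by case: a => // a; case: b => // b _ _; rewrite -PoszD. Qed.

Lemma zneg_ge0 a : 0 <= a -> zneg a = 0%N.
Proof. by rewrite /zneg => ->. Qed.

(* Relations among the elements of [S] form a pure subgroup of [Z^n]; a total
   cone with that equivalence orders the submonoid generated by [S]. *)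
Section SubmonoidOrder.
Variables (G : nmodType) (Gc : cancellative G) (Gt : quotient_torsion_free G).
Variable S : seq G.
Local Notation n := (size S).
Implicit Types (x y z e : 'rV[int]_n).

Definition pos_comb z : G := \sum_(i < n) (nth 0 S i) *+ zpos (z 0 i).
Definition neg_comb z : G := \sum_(i < n) (nth 0 S i) *+ zneg (z 0 i).
Definition is_relation z := pos_comb z = neg_comb z.
Definition nonneg_row z := forall i, 0 <= z 0 i.
Definition in_monoid (a : G) := exists e, nonneg_row e /\ a = pos_comb e.

Lemma cancel_addr (a d b : G) : a + b = d + b -> a = d.
Proof. by rewrite ![_ + b]addrC => /Gc. Qed.

Lemma combB x y :
  pos_comb (x - y) + neg_comb x + pos_comb y = neg_comb (x - y) + pos_comb x + neg_comb y.
Proof.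
rewrite /pos_comb /neg_comb -!big_split /=; apply: eq_bigr => i _.
by rewrite -!mulrnDr !mxE zposnegB.
Qed.

Lemma relation_pure_subgroup : pure_subgroup is_relation.
Proof.
split.
- by rewrite /is_relation /pos_comb /neg_comb !big1 // => i _; rewrite mxE /zpos /zneg mulr0n.
- by move=> x y hx hy; have := combB x y; rewrite hx hy => /cancel_addr /cancel_addr.
move=> m x; rewrite /is_relation /pos_comb /neg_comb.
have E i : (x *+ m.+1) 0 i = x 0 i * m.+1%:R by rewrite mxMn_entry mulr_natr.
under eq_bigr do rewrite E zposMn mulrnA.
under [in X in _ = X]eq_bigr do rewrite E znegMn mulrnA.
by rewrite !sumrMnl => /Gt.
Qed.

Lemma neg_comb_nonneg z : nonneg_row z -> neg_comb z = 0.
Proof. by move=> hz; rewrite /neg_comb big1 // => i _; rewrite zneg_ge0. Qed.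

Lemma nonneg_rowD z e : nonneg_row z -> nonneg_row e -> nonneg_row (z + e).
Proof. by move=> hz he i; rewrite mxE addr_ge0. Qed.

Lemma pos_combD z e : nonneg_row z -> nonneg_row e -> pos_comb (z + e) = pos_comb z + pos_comb e.
Proof.
move=> hz he; rewrite /pos_comb -big_split /=; apply: eq_bigr => i _.
by rewrite mxE zposD // mulrnDr.
Qed.

Lemma pos_comb_eq_relation e e' : nonneg_row e -> nonneg_row e' ->
  pos_comb e = pos_comb e' <-> is_relation (e - e').
Proof.
move=> h h'; have := combB e e'.
rewrite (neg_comb_nonneg h) (neg_comb_nonneg h') !addr0 => k.
split => [E|E]; first by apply: (@cancel_addr _ _ (pos_comb e')); rewrite k E.
by apply/esym/(Gc (a := neg_comb (e - e'))); rewrite -k -E.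
Qed.

Lemma in_monoid0 : in_monoid 0.
Proof.
exists 0; split; first by move=> i; rewrite mxE.
by rewrite /pos_comb big1 // => i _; rewrite mxE /zpos /= mulr0n.
Qed.

Lemma in_monoidD a b : in_monoid a -> in_monoid b -> in_monoid (a + b).
Proof.
move=> [e [he ->]] [f [hf ->]]; exists (e + f).
by split; [exact: nonneg_rowD | rewrite pos_combD].
Qed.

Lemma in_monoid_gen a : a \in S -> in_monoid a.
Proof.
move=> aS; have hi : (index a S < n)%N by rewrite index_mem.
exists (delta_mx 0 (Ordinal hi)); split; first by move=> j; rewrite mxE; case: (_ && _).
rewrite /pos_comb (bigD1 (Ordinal hi)) //= big1 ?addr0.
  by rewrite mxE !eqxx /zpos /= nth_index.
by move=> j ji; rewrite mxE eqxx /= (negbTE ji) /zpos /= mulr0n.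
Qed.

Variables (P : 'rV[int]_n -> Prop) (hP : total_cone is_relation P).

Definition cone_lt (a b : G) := a != b /\ exists e e',
  [/\ nonneg_row e, nonneg_row e', a = pos_comb e, b = pos_comb e' & P (e' - e)].

Lemma cone_lt_irr a : ~ cone_lt a a.
Proof. by case; rewrite eqxx. Qed.

Lemma cone_lt_trans a b c : cone_lt a b -> cone_lt b c -> cone_lt a c.
Proof.
have [PD _ PL] := hP; have LP x : is_relation x -> P x by move/PL => [].
move=> [ab [e1 [e1' [h1 h1' Ea Eb p1]]]] [_ [e2 [e2' [h2 h2' E2 Ec p2]]]].
subst a b c.
have L12 : is_relation (e2 - e1') by apply/pos_comb_eq_relation.
split.
  apply/negP => /eqP E; have L3 : is_relation (e1 - e2') by apply/pos_comb_eq_relation.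
  move/negP: ab; apply; apply/eqP/(pos_comb_eq_relation h1 h1')/PL; split; last by rewrite opprB.
  have -> : e1 - e1' = (e1 - e2') + (e2' - e2) + (e2 - e1') by rewrite !addrA !subrK.
  exact: PD (PD _ _ (LP _ L3) p2) (LP _ L12).
exists e1, e2'; split => //.
have -> : e2' - e1 = (e2' - e2) + (e2 - e1') + (e1' - e1) by rewrite !addrA !subrK.
exact: PD (PD _ _ p2 (LP _ L12)) p1.
Qed.

Lemma cone_lt_total a b : in_monoid a -> in_monoid b ->
  [\/ a = b, cone_lt a b | cone_lt b a].
Proof.
have [_ PN _] := hP; move=> [e [he ->]] [e' [he' ->]].
have [E|ne] := eqVneq (pos_comb e) (pos_comb e'); first by constructor 1.
case: (PN (e' - e)) => h; first by constructor 2; split => //; exists e, e'.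
constructor 3; split; first by rewrite eq_sym.
by exists e', e; split => //; rewrite -opprB.
Qed.

Lemma cone_lt_addr a b c : in_monoid c -> cone_lt a b -> cone_lt (a + c) (b + c).
Proof.
move=> [e [he Ec]] [ab [e1 [e1' [h1 h1' Ea Eb p1]]]]; subst a b c; split.
  by apply: contra ab => /eqP /cancel_addr ->.
exists (e1 + e), (e1' + e); split; try exact: nonneg_rowD; try by rewrite pos_combD.
by rewrite opprD addrACA subrr addr0.
Qed.

End SubmonoidOrder.

Lemma ordered_submonoid_exists (G : nmodType) (Gc : cancellative G)
  (Gt : quotient_torsion_free G) (S : seq G) :
  exists (M : G -> Prop) (lt : G -> G -> Prop),
  [/\ M 0, (forall a b, M a -> M b -> M (a + b)), (forall a, a \in S -> M a)
    & (forall a, ~ lt a a)] /\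
  [/\ (forall a b c, lt a b -> lt b c -> lt a c),
      (forall a b, M a -> M b -> [\/ a = b, lt a b | lt b a])
    & (forall a b c, M c -> lt a b -> lt (a + c) (b + c))].
Proof.
have [P hP] := pure_subgroup_cone (relation_pure_subgroup Gc Gt S).
exists (in_monoid S), (cone_lt P); split; split.
- exact: in_monoid0.
- exact: in_monoidD.
- exact: in_monoid_gen.
- exact: cone_lt_irr.
- by move=> a b c; apply: (cone_lt_trans Gc hP).
- by move=> a b; apply: (cone_lt_total hP).
- by move=> a b c; apply: (cone_lt_addr Gc).
Qed.

(** * Homogeneous terms of polynomials *)

Definition add_deg (G : nmodType) (x y : nat * G) : nat * G := ((x.1 + y.1)%N, x.2 + y.2).

Lemma add_degC (G : nmodType) (x y : nat * G) : add_deg x y = add_deg y x.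
Proof. by rewrite /add_deg addnC addrC. Qed.

Lemma add_deg_inj (G : nmodType) (Gc : cancellative G) (e : nat * G) : injective (add_deg e).
Proof.
move=> [i a] [j b]; rewrite /add_deg /= => -[/eqP].
by rewrite eqn_add2l => /eqP -> /Gc ->.
Qed.

(* A polynomial is handled through its list of homogeneous terms
   [((i, g), c)], standing for [c X^i] with [c] homogeneous of degree [g]. *)
Section Terms.
Variables (G : nmodType) (R : idomainType) (gr : grading G R).
Local Notation hom := (Defs.hom gr).
Local Notation hcomp := (hcomp gr).
Local Notation hsupp := (hsupp gr).
Implicit Types (F H : {poly R}) (T : seq ((nat * G) * R)) (d : nat * G).

Definition coefh F d := hcomp d.2 F`_d.1.
Definition poly_of_terms T : {poly R} := \sum_(t <- T) t.2%:P * 'X^(t.1.1).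
Definition hom_terms T := forall t, t \in T -> hom t.1.2 t.2.
Definition terms F : seq ((nat * G) * R) :=
  [seq ((i, g), hcomp g F`_i) | i <- iota 0 (size F), g <- hsupp F`_i].
Definition shift_terms e (c : R) T := [seq (add_deg e t.1, c * t.2) | t <- T].

Lemma coefhB F H d : coefh (F - H) d = coefh F d - coefh H d.
Proof. by rewrite /coefh coefB hcompB. Qed.

Lemma coefh_poly_of_terms T d : hom_terms T ->
  coefh (poly_of_terms T) d = \sum_(t <- T | t.1 == d) t.2.
Proof.
move=> hT; rewrite /coefh coef_sum hcomp_sum [RHS]big_mkcond /= big_seq [RHS]big_seq.
apply: eq_bigr => t tT; rewrite coefCM coefXn.
case: t tT => [[i g] x] tT /=; case: d => [k h] /=.
rewrite xpair_eqE; case: (eqVneq k i) => [e|ki] /=; last by rewrite mulr0 hcomp0.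
by rewrite mulr1 (hcompE_hom _ (hT _ tT)).
Qed.

Lemma terms_coefh F t : t \in terms F -> t.2 = coefh F t.1.
Proof. by move/allpairsPdep => [i [g [_ _ ->]]]. Qed.

Lemma terms_hom F : hom_terms (terms F).
Proof. by move=> t /allpairsPdep => [[i [g [_ _ ->]]]]; apply: hcomp_is_hom. Qed.

Lemma terms_size F t : t \in terms F -> (t.1.1 < size F)%N.
Proof. by move/allpairsPdep => [i [g [+ _ ->]]]; rewrite mem_iota. Qed.

Lemma terms_uniq F : uniq (map fst (terms F)).
Proof.
rewrite /terms; elim: (iota 0 (size F)) (iota_uniq 0 (size F)) => //= i l IH /andP [il ul].
rewrite map_cat cat_uniq IH // andbT; apply/andP; split.
  by rewrite -map_comp map_inj_uniq ?hsupp_uniq // => a b [].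
apply/hasPn => x /mapP [t] /allpairsPdep [j [g [jl _ ->]]] -> /=.
by apply/negP => /mapP [t'] /mapP [g' _ ->] /= [] ij _; rewrite -ij jl in il.
Qed.

Lemma terms_poly F : poly_of_terms (terms F) = F.
Proof.
rewrite /poly_of_terms /terms big_allpairs_dep /=.
rewrite -[RHS]coefK poly_def -(big_mkord xpredT (fun i => F`_i *: 'X^i)).
rewrite /index_iota subn0; apply: eq_bigr => i _.
by rewrite -big_distrl /= -rmorph_sum -sum_hcomp mul_polyC.
Qed.

Lemma coefh_terms F d : coefh F d = \sum_(t <- terms F | t.1 == d) t.2.
Proof. by rewrite -{1}(terms_poly F) coefh_poly_of_terms //; apply: terms_hom. Qed.

Lemma coefh_notin_terms F d : d \notin map fst (terms F) -> coefh F d = 0.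
Proof.
move=> dn; rewrite coefh_terms big_seq_cond big1 // => t /andP [tT /eqP td].
by move: dn; rewrite -td map_f.
Qed.

Lemma poly_of_terms_mul T1 T2 : poly_of_terms T1 * poly_of_terms T2 =
  poly_of_terms [seq (add_deg t1.1 t2.1, t1.2 * t2.2) | t1 <- T1, t2 <- T2].
Proof.
rewrite /poly_of_terms big_allpairs_dep /= big_distrl /=; apply: eq_bigr => t1 _.
by rewrite big_distrr /=; apply: eq_bigr => t2 _; rewrite polyCM exprD; ring.
Qed.

Lemma coefh_mul_terms T1 T2 d : hom_terms T1 -> hom_terms T2 ->
  coefh (poly_of_terms T1 * poly_of_terms T2) d =
  \sum_(t1 <- T1) \sum_(t2 <- T2 | add_deg t1.1 t2.1 == d) t1.2 * t2.2.
Proof.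
move=> h1 h2; rewrite poly_of_terms_mul coefh_poly_of_terms; last first.
  by move=> t /allpairsPdep [t1 [t2 [/h1 t1T /h2 t2T ->]]]; apply: Defs.homM.
rewrite big_mkcond big_allpairs_dep /=; apply: eq_bigr => t1 _.
by rewrite [RHS]big_mkcond.
Qed.

Lemma coefh_mul_ideal (J : R -> Prop) F H : is_ideal J -> (forall d, J (coefh F d)) ->
  forall d, J (coefh (H * F) d).
Proof.
move=> hJ hF d; rewrite -(terms_poly H) -(terms_poly F) coefh_mul_terms; try exact: terms_hom.
apply: ideal_big => // t1 _; rewrite big_seq_cond; apply: ideal_big => // t2.
by move=> /andP [t2T _]; rewrite (terms_coefh t2T); apply: idealM.
Qed.

Lemma coefh_filter_ideal (J : R -> Prop) F T (P : pred ((nat * G) * R)) :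
  is_ideal J -> hom_terms T -> (forall t, t \in T -> ~~ P t -> J t.2) ->
  (forall d, J (coefh (F * poly_of_terms T) d)) ->
  forall d, J (coefh (F * poly_of_terms (filter P T)) d).
Proof.
move=> hJ hT hP hFT d.
have TP : poly_of_terms T =
    poly_of_terms (filter P T) + poly_of_terms [seq t <- T | ~~ P t].
  by rewrite /poly_of_terms !big_filter [LHS](bigID P).
have -> : F * poly_of_terms (filter P T) =
    F * poly_of_terms T - F * poly_of_terms [seq t <- T | ~~ P t].
  by rewrite TP mulrDr addrK.
rewrite coefhB; apply: idealB => //; apply: coefh_mul_ideal => // d'.
rewrite coefh_poly_of_terms; last by move=> t; rewrite mem_filter => /andP [_ /hT].
rewrite big_seq_cond; apply: ideal_big => // t.
by rewrite mem_filter -andbA => /and3P [nP tT _]; apply: hP.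
Qed.

Lemma poly_of_terms_shift T e (c : R) :
  poly_of_terms (shift_terms e c T) = (c%:P * 'X^(e.1)) * poly_of_terms T.
Proof.
rewrite /poly_of_terms big_map big_distrr /=; apply: eq_bigr => t _.
by rewrite polyCM exprD; ring.
Qed.

End Terms.

(** * A McCoy lemma over a totally ordered monoid of degrees *)

Lemma size_filter_lt (T : eqType) (P : pred T) (s : seq T) t :
  t \in s -> ~~ P t -> (size (filter P s) < size s)%N.
Proof.
move=> ts nPt; rewrite size_filter -(count_predC P s) -[X in (X < _)%N]addn0 ltn_add2l.
by rewrite -has_count; apply/hasP; exists t.
Qed.

Section UnitContent.
Variables (G : nmodType) (R : idomainType) (gr : grading G R).
Hypothesis Gc : cancellative G.
Variables (M : G -> Prop) (lt : G -> G -> Prop).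
Hypotheses (MD : forall a b, M a -> M b -> M (a + b))
  (ltirr : forall a, ~ lt a a)
  (lttr : forall a b c, lt a b -> lt b c -> lt a c)
  (lttot : forall a b, M a -> M b -> [\/ a = b, lt a b | lt b a])
  (ltD : forall a b c, M c -> lt a b -> lt (a + c) (b + c)).
Local Notation terms := (terms gr).
Local Notation coefh := (coefh gr).
Local Notation hom_terms := (hom_terms gr).

Definition lt_deg (x y : nat * G) := (x.1 < y.1)%N \/ x.1 = y.1 /\ lt x.2 y.2.
Definition in_M_deg (x : nat * G) := M x.2.

Lemma lt_deg_irr x : ~ lt_deg x x.
Proof. by case => [|[_ /ltirr //]]; rewrite ltnn. Qed.

Lemma lt_deg_trans x y z : lt_deg x y -> lt_deg y z -> lt_deg x z.
Proof.
case=> [h1|[e1 h1]] [h2|[e2 h2]].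
- by left; exact: ltn_trans h1 h2.
- by left; rewrite -e2.
- by left; rewrite e1.
- by right; split; [rewrite e1 e2 | exact: lttr h1 h2].
Qed.

Lemma lt_deg_total x y : in_M_deg x -> in_M_deg y -> [\/ x = y, lt_deg x y | lt_deg y x].
Proof.
case: x y => [i a] [j b]; rewrite /in_M_deg /= => ha hb.
case: (ltngtP i j) => h; [by constructor 2; left | by constructor 3; left |].
subst j; case: (lttot ha hb) => [->|h|h]; first by constructor 1.
  by constructor 2; right.
by constructor 3; right.
Qed.

Lemma lt_deg_addr x y z : in_M_deg z -> lt_deg x y -> lt_deg (add_deg x z) (add_deg y z).
Proof.
case: x y z => [i a] [j b] [k c]; rewrite /in_M_deg /= => hc.
case=> /= [h|[e h]]; first by left; rewrite ltn_add2r.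
by right; split; [rewrite e | exact: ltD].
Qed.

Lemma lt_deg_addl x y z : in_M_deg z -> lt_deg x y -> lt_deg (add_deg z x) (add_deg z y).
Proof. by move=> hz h; rewrite ![add_deg z _]add_degC; apply: lt_deg_addr. Qed.

Lemma lt_deg_max (A : eqType) (k : A -> nat * G) (l : seq A) :
  (forall x, x \in l -> in_M_deg (k x)) -> l != [::] ->
  exists2 m, m \in l & forall x, x \in l -> k x = k m \/ lt_deg (k x) (k m).
Proof.
elim: l => // x l IH hl _; have hx := hl x (mem_head _ _).
have [-> | ln] := eqVneq l [::].
  by exists x; [exact: mem_head | move=> y; rewrite inE => /eqP ->; left].
have [m ml hm] : exists2 m, m \in l & forall y, y \in l -> k y = k m \/ lt_deg (k y) (k m).
  by apply: IH => // y yl; apply: hl; rewrite inE yl orbT.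
have mlx : m \in x :: l by rewrite inE ml orbT.
case: (lt_deg_total hx (hl m mlx)) => [e|h|h].
- by exists m => // y; rewrite inE => /predU1P [->|/hm //]; left.
- by exists m => // y; rewrite inE => /predU1P [->|/hm //]; right.
- exists x; first exact: mem_head.
  move=> y; rewrite inE => /predU1P [->|/hm [->|h']]; [by left | by right |].
  by right; exact: lt_deg_trans h' h.
Qed.

Variables (p : {poly R}) (J : R -> Prop).
Hypotheses (hJ : is_ideal J) (p1 : Af gr p 1)
  (hpM : forall u, u \in terms p -> in_M_deg u.1).

Lemma unit_content_ideal x : (forall u, u \in terms p -> J (u.2 * x)) -> J x.
Proof.
move=> h; rewrite -[x]mul1r; apply: (Af_sub (preimage_mulr_is_ideal x hJ)) p1 => i g.
rewrite -[hcomp gr g p`_i]/(coefh p (i, g)).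
have [/mapP [u up ->]|nin] := boolP ((i, g) \in map fst (terms p)).
  by rewrite -(terms_coefh up); apply: h.
by rewrite (coefh_notin_terms nin) mul0r; apply: ideal0.
Qed.

(* The product of the top terms of [p] and of [T] not killed by [J] is the
   only contribution to its own degree that is not already in [J]. *)
Lemma mccoy_top_product T u0 t0 : uniq (map fst T) -> hom_terms T ->
  (forall t, t \in T -> in_M_deg t.1) ->
  (forall d, J (coefh (p * poly_of_terms T) d)) -> u0 \in terms p -> t0 \in T ->
  (forall t, t \in T -> t.1 = t0.1 \/ lt_deg t.1 t0.1) ->
  (forall u, u \in terms p -> lt_deg u0.1 u.1 -> forall t, t \in T -> J (u.2 * t.2)) ->
  J (u0.2 * t0.2).
Proof.
move=> uT hT TM hpT u0p t0T t0max above; have u0M := hpM u0p.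
set top := add_deg u0.1 t0.1.
have := hpT top; rewrite -{1}(terms_poly gr p) (coefh_mul_terms top (@terms_hom _ _ gr p) hT).
rewrite (bigID (fun u => u.1 == u0.1)) /= => H.
have J_other : J (\sum_(u <- terms p | u.1 != u0.1)
    \sum_(t <- T | add_deg u.1 t.1 == top) u.2 * t.2).
  rewrite big_seq_cond; apply: ideal_big => // u /andP [up ne].
  rewrite big_seq_cond; apply: ideal_big => // t /andP [tT /eqP et].
  case: (lt_deg_total u0M (hpM up)) => [e|h|h]; first by rewrite e eqxx in ne.
    exact: above.
  exfalso; have h1 := lt_deg_addr (TM t tT) h; rewrite et in h1.
  case: (t0max t tT) => [e|h2]; first by move: h1; rewrite e; apply: lt_deg_irr.
  exact: lt_deg_irr (lt_deg_trans h1 (lt_deg_addl u0M h2)).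
move: (idealB hJ H J_other); rewrite addrK.
rewrite (sum_key_uniq (fun u => \sum_(t <- T | add_deg u.1 t.1 == top) u.2 * t.2))
  ?terms_uniq //=.
rewrite (eq_bigl (fun t => t.1 == t0.1)); last first.
  by move=> t /=; apply/eqP/eqP => [/(add_deg_inj Gc)|->].
by rewrite (sum_key_uniq (fun t => u0.2 * t.2)).
Qed.

Definition killed_terms T := [/\ uniq (map fst T), hom_terms T,
  forall t, t \in T -> in_M_deg t.1 /\ ~ J t.2
  & forall d, J (coefh (p * poly_of_terms T) d)].

Lemma killed_terms_shift T u : u \in terms p -> killed_terms T ->
  killed_terms [seq t <- shift_terms u.1 u.2 T | `[< ~ J t.2 >]].
Proof.
move=> up [uT hT hTJ hpT]; have uh : Defs.hom gr u.1.2 u.2 by apply: terms_hom up.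
have hsT : hom_terms (shift_terms u.1 u.2 T).
  by move=> t /mapP [t' /hT t'h ->]; apply: Defs.homM.
split.
- apply: subseq_uniq (map_subseq _ (filter_subseq _ _)) _.
  by rewrite -map_comp (map_comp (add_deg u.1) fst) map_inj_uniq //; apply: add_deg_inj.
- by move=> t; rewrite mem_filter => /andP [_ /hsT].
- move=> t; rewrite mem_filter => /andP [/asboolP nJ /mapP [t' t'T te]].
  rewrite te in nJ *; split => //.
  by rewrite /in_M_deg /=; apply: MD; [apply: hpM | case: (hTJ t' t'T)].
apply: coefh_filter_ideal => //; first by move=> t _ /asboolPn /contrapT.
by move=> d; rewrite poly_of_terms_shift mulrCA; apply: coefh_mul_ideal.
Qed.

(* McCoy-style descent: multiplying [T] by the top term [u0] of [p] that does
   not kill it modulo [J] and discarding the products in [J] gives a strictly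
   shorter list, which still contains [u0 tw] for a witness [tw]. *)
Lemma mccoy_terms T : killed_terms T -> T = [::].
Proof.
move: {2}(size T) (leqnn (size T)) => n.
elim: n T => [|n IH] T; first by rewrite leqn0 => /nilP.
move=> Tn kT; have [uT hT hTJ hpT] := kT; apply/eqP; apply: contraT => T0.
have TM t : t \in T -> in_M_deg t.1 by case/hTJ.
pose E := [seq u <- terms p | `[< exists2 t, t \in T & ~ J (u.2 * t.2) >]].
have notE u : u \in terms p -> u \notin E -> forall t, t \in T -> J (u.2 * t.2).
  move=> up; rewrite mem_filter up andbT => /asboolPn nE t tT.
  by apply: contrapT => nJ; apply: nE; exists t.
have [t0 t0T t0max] := lt_deg_max (k := fst) TM T0.
have [E0|En] := eqVneq E [::].
  have [_ []] := hTJ t0 t0T; apply: unit_content_ideal => u up.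
  by apply: notE => //; rewrite E0.
have EM u : u \in E -> in_M_deg u.1 by rewrite mem_filter => /andP [_ /hpM].
have [u0 u0E u0max] := lt_deg_max (k := fst) EM En.
move: (u0E); rewrite mem_filter => /andP [/asboolP [tw twT twJ] u0p].
have Jtop : J (u0.2 * t0.2).
  apply: (mccoy_top_product uT hT TM hpT u0p t0T t0max) => u up lt_u0u.
  apply: notE => //; apply/negP => uE; case: (u0max u uE) => [e|lt_uu0].
    by move: lt_u0u; rewrite e; apply: lt_deg_irr.
  exact: lt_deg_irr (lt_deg_trans lt_u0u lt_uu0).
set T2 := [seq t <- shift_terms u0.1 u0.2 T | `[< ~ J t.2 >]].
have T2n : (size T2 <= n)%N.
  rewrite -ltnS (leq_trans _ Tn) // -(size_map (fun t => (add_deg u0.1 t.1, u0.2 * t.2)) T).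
  by apply: (size_filter_lt (map_f _ t0T)); apply/negP => /asboolP; apply.
have : (add_deg u0.1 tw.1, u0.2 * tw.2) \in T2.
  by rewrite mem_filter map_f // andbT; apply/asboolP.
by rewrite (IH T2 T2n (killed_terms_shift u0p kT)).
Qed.

Lemma unit_content_cancel (g : {poly R}) : (forall u, u \in terms g -> in_M_deg u.1) ->
  (forall d, J (coefh (p * g) d)) -> forall d, J (coefh g d).
Proof.
move=> hgM hpg d; pose T := [seq t <- terms g | `[< ~ J t.2 >]].
have T0 : T = [::].
  apply: mccoy_terms; split.
  - exact: subseq_uniq (map_subseq _ (filter_subseq _ _)) (terms_uniq gr g).
  - by move=> t; rewrite mem_filter => /andP [_ /terms_hom].
  - by move=> t; rewrite mem_filter => /andP [/asboolP nJ /hgM].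
  apply: coefh_filter_ideal => //; first exact: terms_hom.
    by move=> t _ /asboolPn /contrapT.
  by rewrite terms_poly.
rewrite coefh_terms big_seq_cond; apply: ideal_big => // t /andP [tT _].
apply: contrapT => nJ; have : t \in T by rewrite mem_filter tT andbT; apply/asboolP.
by rewrite T0.
Qed.

End UnitContent.

(** * The content formula in graded-Prüfer domains *)

Section PruferToContentFormula.
Variables (G : nmodType) (R : idomainType) (gr : grading G R).
Hypothesis Gc : cancellative G.
Local Notation hom := (Defs.hom gr).
Local Notation hcomp := (hcomp gr).
Local Notation hsupp := (hsupp gr).
Local Notation Af := (Af gr).
Local Notation coefh := (coefh gr).
Local Notation terms := (terms gr).
Local Notation tf := (@FracField.tofrac R).

Definition multiples (d : R) : R -> Prop := fun y => exists r, y = d * r.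

Lemma multiples_is_ideal d : is_ideal (multiples d).
Proof.
split; first by exists 0; rewrite mulr0.
  by move=> x y [r ->] [r' ->]; exists (r + r'); rewrite mulrDr.
by move=> r x [r' ->]; exists (r * r'); rewrite mulrCA.
Qed.

Definition dvd_all_mul (I : R -> Prop) (d v : R) := forall x, I x -> multiples d (x * v).

Lemma invertible_decomp (I : R -> Prop) d : invertible_ideal I -> I d ->
  exists s : seq (R * R), (forall q, q \in s -> I q.1 /\ dvd_all_mul I d q.2) /\
    d = \sum_(q <- s) q.1 * q.2.
Proof.
move=> [J [_ _ _ _ hJ]] Id.
have prod_in x w : I x -> J w -> exists r, tf x * w = tf r.
  move=> Ix Jw; apply/(hJ _); exists [:: (x, w)]; split; last by rewrite big_seq1.
  by move=> q; rewrite inE => /eqP ->.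
have [s [hs e1]] : exists s : seq (R * {fraction R}),
    (forall q, q \in s -> I q.1 /\ J q.2) /\ 1 = \sum_(q <- s) tf q.1 * q.2.
  by apply/(hJ 1); exists 1; rewrite tofrac1.
suff [t [ht et]] : exists t : seq (R * R),
    (forall q, q \in t -> I q.1 /\ dvd_all_mul I d q.2) /\
    tf d * \sum_(q <- s) tf q.1 * q.2 = tf (\sum_(q <- t) q.1 * q.2).
  by exists t; split => //; apply: tofrac_inj; rewrite -et -e1 mulr1.
elim: s hs {e1} => [|q s IH] hs; first by exists [::]; rewrite !big_nil mulr0.
have [Iq Jq] := hs q (mem_head _ _); have [v ev] := prod_in d _ Id Jq.
have [t [ht et]] : exists t : seq (R * R),
    (forall q, q \in t -> I q.1 /\ dvd_all_mul I d q.2) /\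
    tf d * \sum_(q <- s) tf q.1 * q.2 = tf (\sum_(q <- t) q.1 * q.2).
  by apply: IH => q' q's; apply: hs; rewrite inE q's orbT.
exists ((q.1, v) :: t); split.
  move=> q'; rewrite inE => /predU1P [-> | /ht //]; split => // x Ix.
  have [r er] := prod_in x _ Ix Jq.
  by exists r; apply: tofrac_inj; rewrite !tofracM -ev -er mulrCA.
by rewrite !big_cons mulrDr et tofracD tofracM -ev mulrCA.
Qed.

Lemma Af_decomp (f : {poly R}) d : invertible_ideal (Af f) -> Af f d ->
  exists l : seq ((nat * G) * R),
    (forall k, k \in l -> (k.1.1 < size f)%N /\ dvd_all_mul (Af f) d k.2) /\
    d = \sum_(k <- l) coefh f k.1 * k.2.
Proof.
move=> If Ad; have [s [hs ed]] := invertible_decomp If Ad.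
pose D y := exists l : seq ((nat * G) * R),
  (forall k, k \in l -> (k.1.1 < size f)%N /\ dvd_all_mul (Af f) d k.2) /\
  y = \sum_(k <- l) coefh f k.1 * k.2.
have D_ideal : is_ideal D.
  split; first by exists [::]; rewrite big_nil.
    move=> x y [l1 [h1 ->]] [l2 [h2 ->]]; exists (l1 ++ l2); split; last by rewrite big_cat.
    by move=> k; rewrite mem_cat => /orP [/h1 | /h2].
  move=> r x [l1 [h1 ->]]; exists [seq (k.1, r * k.2) | k <- l1]; split.
    move=> k /mapP [k' /h1 [k'N k'V] ->]; split => // x' /k'V [r' e].
    by exists (r * r'); rewrite mulrCA e mulrCA.
  by rewrite big_map mulr_sumr; apply: eq_bigr => k _; rewrite mulrCA.
suff Dd : D d by exact: Dd.
rewrite ed big_seq; apply: ideal_big => // q /hs [Aq Vq]; move: Aq.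
apply: (Af_sub (preimage_mulr_is_ideal q.2 D_ideal)) => i g.
have [hi|hi] := ltnP i (size f); last first.
  by exists [::]; rewrite nth_default // hcomp0 mul0r big_nil.
by exists [:: ((i, g), q.2)]; split; [move=> k; rewrite inE => /eqP -> | rewrite big_seq1].
Qed.

Lemma dvd_all_mul_hcomp (f : {poly R}) γ d v b : hom γ d ->
  dvd_all_mul (Af f) d v -> dvd_all_mul (Af f) d (hcomp b v).
Proof.
move=> hd Vv; apply: (Af_sub (preimage_mulr_is_ideal _ (multiples_is_ideal d))) => i g.
rewrite -(hcompMl_shift Gc b v (hcomp_is_hom gr g f`_i)).
have [r ->] := Vv _ (Af_hcomp gr f i g).
exact: (hcompMl_hom_factor _ _ hd).
Qed.

Lemma add_deg_complement N i1 i2 (g1 g2 b γ : G) : (i1 < N)%N -> (i2 < N)%N ->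
  g2 + b = γ -> (add_deg (i1, g1) ((N - i2)%N, b) == (N, γ)) = ((i1, g1) == (i2, g2)).
Proof.
move=> i1N i2N hb; rewrite /add_deg /= !xpair_eqE; congr andb; first by apply/eqP/eqP; lia.
by rewrite -hb; apply/eqP/eqP => [h|->] //; apply: (Gc (a := b)); rewrite addrC h addrC.
Qed.

Section Cofactor.
Variables (f : {poly R}) (γ : G) (d : R) (l : seq ((nat * G) * R)).
Hypotheses (hd : hom γ d)
  (hl : forall k, k \in l -> (k.1.1 < size f)%N /\ dvd_all_mul (Af f) d k.2)
  (el : d = \sum_(k <- l) coefh f k.1 * k.2).

(* Each summand [f_k c] of [el] is matched with the degree-[γ - deg f_k] part
   of [c], placed in degree [size f - k] so that it lands in degree [size f]. *)
Definition cofactor_terms := [seq ((size f - k.1.1)%N, b, hcomp b k.2) |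
  k <- l, b <- [seq b <- hsupp k.2 | k.1.2 + b == γ]].
Local Notation H := (poly_of_terms cofactor_terms).

Lemma cofactor_terms_hom : hom_terms gr cofactor_terms.
Proof. by move=> t /allpairsPdep [k [b [_ _ ->]]]; apply: hcomp_is_hom. Qed.

Lemma cofactor_dvd m : multiples d ((f * H)`_m).
Proof.
have hM := multiples_is_ideal d.
rewrite coefM; apply: ideal_big => // i _.
rewrite coef_sum mulr_sumr big_seq; apply: ideal_big => // t tT.
rewrite coefCM coefXn mulrA; move: tT => /allpairsPdep [k [b [kl _ ->]]] /=.
have [r ->] : multiples d (f`_i * hcomp b k.2).
  exact: dvd_all_mul_hcomp hd (hl kl).2 _ (Af_coef gr f i).
by rewrite -mulrA; eexists.
Qed.

Lemma cofactor_top : coefh (f * H) (size f, γ) = d.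
Proof.
rewrite -{1}(terms_poly gr f).
rewrite (coefh_mul_terms (size f, γ) (@terms_hom _ _ gr f) cofactor_terms_hom).
transitivity (\sum_(u <- terms f) \sum_(k <- l) \sum_(b <- hsupp k.2 | k.1.2 + b == γ)
    (if add_deg u.1 ((size f - k.1.1)%N, b) == (size f, γ)
     then u.2 * hcomp b k.2 else 0)).
  apply: eq_bigr => u _; rewrite big_mkcond big_allpairs_dep /=.
  by apply: eq_bigr => k _; rewrite big_filter.
transitivity (hcomp γ d); last by rewrite (hcompE_hom _ hd) eqxx.
rewrite [X in hcomp γ X]el hcomp_sum exchange_big big_seq [RHS]big_seq.
apply: eq_bigr => k kl; have [kN _] := hl kl.
rewrite (hcompMl_hom γ k.2 (hcomp_is_hom gr k.1.2 f`_k.1.1)).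
rewrite exchange_big /=; apply: eq_bigr => b /eqP hb.
rewrite -[hcomp k.1.2 f`_k.1.1]/(coefh f k.1) (coefh_terms gr f k.1) big_distrl /=.
rewrite [RHS]big_mkcond /= big_seq [RHS]big_seq; apply: eq_bigr => u uT.
move: (terms_size uT) kN hb; case: u uT => [[i1 g1] x] _; case: k kl => [[i2 g2] y] _ /=.
by move=> i1N i2N hb; rewrite (add_deg_complement g1 i1N i2N hb).
Qed.

End Cofactor.

Lemma content_cofactor (f : {poly R}) i γ : invertible_ideal (Af f) ->
  hcomp γ f`_i != 0 -> exists2 Q : {poly R}, Af Q 1 & exists H, f * H = (hcomp γ f`_i)%:P * Q.
Proof.
set d := hcomp γ f`_i => If d0; have hd : hom γ d := hcomp_is_hom gr γ f`_i.
have [l [hl el]] := Af_decomp If (Af_hcomp gr f i γ).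
set H := poly_of_terms (cofactor_terms f γ l).
pose q m := sval (cid (cofactor_dvd hd hl m)).
pose Q := \poly_(m < size (f * H)) q m.
have eQ : f * H = d%:P * Q.
  apply/polyP => m; rewrite coefCM coef_poly; case: ltnP => hm.
    exact: svalP (cid (cofactor_dvd hd hl m)).
  by rewrite nth_default // mulr0.
exists Q; last by exists H.
have <- : hcomp 0 Q`_(size f) = 1.
  apply: (mulfI d0); rewrite mulr1 -[RHS](cofactor_top hd hl el) eQ /coefh /= coefCM.
  by rewrite -(hcompMl_shift Gc _ _ hd) addr0.
exact: Af_hcomp.
Qed.

Lemma Af_mulC_hom (p : {poly R}) a c x : hom a c -> Af p x -> Af (c%:P * p) (c * x).
Proof.
move=> hc; apply: (Af_sub (preimage_mull_is_ideal c (Af_is_ideal gr _))) => i g.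
by rewrite -(hcompMl_shift Gc _ _ hc) -coefCM; apply: Af_hcomp.
Qed.

Hypotheses (Gt : quotient_torsion_free G) (hP : graded_Prufer gr).

Lemma Af_mul_hcomp (f g : {poly R}) i γ j δ :
  Af (f * g) (hcomp γ f`_i * hcomp δ g`_j).
Proof.
set d := hcomp γ f`_i; have [->|d0] := eqVneq d 0.
  by rewrite mul0r; apply: ideal0 (Af_is_ideal gr _).
have If : invertible_ideal (Af f).
  apply: hP; [exact: Af_homogeneous | exact: Af_fin_gen | by exists d; split => //; apply: Af_hcomp].
have [Q Q1 [H eH]] := content_cofactor If d0.
have [M [lt [[_ MD MS ltirr] [lttr lttot ltD]]]] :=
  ordered_submonoid_exists Gc Gt [seq t.1.2 | t <- terms Q ++ terms g].
have Ag : Af (Q * g) (hcomp δ g`_j).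
  apply: (unit_content_cancel Gc MD ltirr lttr lttot ltD (Af_is_ideal gr (Q * g)) Q1
    _ _ _ (j, δ)).
  - by move=> u uT; apply/MS/map_f; rewrite mem_cat uT.
  - by move=> u uT; apply/MS/map_f; rewrite mem_cat uT orbT.
  - by move=> [k h]; apply: Af_hcomp.
move: (Af_mulC_hom (hcomp_is_hom gr γ f`_i) Ag); rewrite mulrA -eH.
rewrite (_ : f * H * g = H * (f * g)); last by ring.
move/Af_mul_sub_prod; apply: ideal_prod_sub; first exact: Af_is_ideal.
by move=> x y _ Ay; apply: idealM => //; apply: Af_is_ideal.
Qed.

Lemma content_formula_of_graded_Prufer (f g : {poly R}) :
  ideal_eq (ideal_prod (Af f) (Af g)) (Af (f * g)).
Proof.
move=> x; split; last exact: Af_mul_sub_prod.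
apply: ideal_prod_sub; first exact: Af_is_ideal.
move=> a b Aa Ab; move: a Aa; apply: (Af_sub (preimage_mulr_is_ideal b (Af_is_ideal gr _))) => i γ.
move: b Ab; apply: (Af_sub (preimage_mull_is_ideal _ (Af_is_ideal gr _))) => j δ.
exact: Af_mul_hcomp.
Qed.

End PruferToContentFormula.

Unset Implicit Arguments.

Theorem theorem3p1 (G : nmodType) (R : idomainType) (gr : grading G R)
    (Gcanc : cancellative G) (Gtf : quotient_torsion_free G) :
  graded_Prufer gr <->
  (forall f g : {poly R}, ideal_eq (ideal_prod (Af gr f) (Af gr g)) (Af gr (f * g))).
Proof.
split; first exact: content_formula_of_graded_Prufer.
exact: graded_Prufer_of_content_formula.
Qed.
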